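(* Let $m,n$ be coprime positive integers and let $(A,B)\in\mathrm{SL}(2,\mathbb{C})^2$ satisfy $A^m=B^n$ (i.e. $(A,B)$ defines a representation $\rho$ of $G_{m,n}=\langle x,y\mid x^m=y^n\rangle$ into $\mathrm{SL}(2,\mathbb{C})$ with $\rho(x)=A$, $\rho(y)=B$). If any of the following holds: (a) $A^m=B^n\neq\pm\mathrm{Id}$; (b) $A=\pm\mathrm{Id}$ or $B=\pm\mathrm{Id}$; (c) $A$ or $B$ is not diagonalizable, then $\rho$ is reducible, i.e. $A$ and $B$ have a common eigenvector. *)

From HB Require Import structures.
From mathcomp Require Import all_boot all_order all_algebra.
From mathcomp Require Import reals.
From mathcomp Require Import complex.
Set Implicit Arguments. Unset Strict Implicit. Unset Printing Implicit Defensive.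
Import Order.TTheory GRing.Theory Num.Theory.
Local Open Scope ring_scope.

Definition inSL2 {K : fieldType} (A : 'M[K]_2) : Prop := \det A = 1.

Definition pm_id {K : fieldType} (A : 'M[K]_2) : Prop := A = 1%:M \/ A = - 1%:M.

Definition is_eigenvector {K : fieldType} (A : 'M[K]_2) (v : 'cV[K]_2) : Prop :=
  v != 0 /\ exists lam : K, A *m v = lam *: v.

Definition reducible_pair {K : fieldType} (A B : 'M[K]_2) : Prop :=
  exists v : 'cV[K]_2, is_eigenvector A v /\ is_eigenvector B v.

(* If A^m = B^n is not scalar, A and B commute with it and hence preserve its
   eigenspaces, which are lines: an eigenvector of A^m is a common eigenvector.
   If A^m = B^n is scalar, it is +-Id since it lies in SL(2); then
   A^(2m) = B^(2n) = Id, so the minimal polynomials of A and B divide the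
   separable (characteristic 0) polynomials X^(2m) - 1 and X^(2n) - 1, and A, B
   are diagonalizable, ruling out (c).  In case (b) every vector is an
   eigenvector of the factor equal to +-Id. *)
From HB Require Import structures.
From mathcomp Require Import all_boot all_order all_algebra.
From mathcomp Require Import reals.
From mathcomp Require Import complex separable cyclotomic.
Set Implicit Arguments. Unset Strict Implicit. Unset Printing Implicit Defensive.
Import Order.TTheory GRing.Theory Num.Theory.
Local Open Scope ring_scope.

Lemma det_expr (R : comPzRingType) (n k : nat) (A : 'M[R]_n.+1) :
  \det (A ^+ k) = \det A ^+ k.
Proof.
elim: k => [|k IHk]; first by rewrite !expr0 det1.
by rewrite !exprS detM IHk.
Qed.

Lemma inSL2_expr (K : fieldType) (k : nat) (A : 'M[K]_2) :
  inSL2 A -> inSL2 (A ^+ k).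
Proof. by rewrite /inSL2 det_expr => ->; rewrite expr1n. Qed.

Lemma inSL2_scalar_pm_id (K : fieldType) (A : 'M[K]_2) :
  inSL2 A -> is_scalar_mx A -> pm_id A.
Proof.
move=> detA /is_scalar_mxP[a defA]; move: detA.
rewrite /inSL2 defA det_scalar => /eqP; rewrite sqrf_eq1 => /orP[]/eqP->.
- by left.
- by right; rewrite raddfN.
Qed.

Lemma pm_id_sqr (K : fieldType) (A : 'M[K]_2) : pm_id A -> A ^+ 2 = 1.
Proof. by case=> ->; rewrite ?sqrrN expr1n. Qed.

Lemma pm_id_eigenvector (K : fieldType) (A : 'M[K]_2) (v : 'cV[K]_2) :
  pm_id A -> v != 0 -> is_eigenvector A v.
Proof.
move=> pmA v_neq0; split=> //.
by case: pmA => ->; [exists 1; rewrite mul1mx scale1r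
                   | exists (-1); rewrite mulNmx mul1mx scaleN1r].
Qed.

Lemma reducible_pair_sym (K : fieldType) (A B : 'M[K]_2) :
  reducible_pair A B -> reducible_pair B A.
Proof. by case=> v [Av Bv]; exists v. Qed.

Lemma trmx_row_eigenvector (K : fieldType) (A : 'M[K]_2) (v : 'rV[K]_2) :
  v != 0 -> stablemx v A^T -> is_eigenvector A v^T.
Proof.
move=> v_neq0 /sub_rVP[a vA]; split.
  by apply: contra v_neq0 => /eqP/(congr1 trmx); rewrite trmxK trmx0 => ->.
by exists a; apply: trmx_inj; rewrite trmx_mul trmxK vA linearZ /= trmxK.
Qed.

Section ClosedField.
Variable K : closedFieldType.

Lemma exists_eigenvector (A : 'M[K]_2) : exists v, is_eigenvector A v.
Proof.
have /closed_rootP[a] : size (char_poly A^T) != 1 by rewrite size_char_poly.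
rewrite -eigenvalue_root_char => /eigenvalueP[v vA v_neq0].
exists v^T; apply: trmx_row_eigenvector => //.
by apply/eigenvectorP; exists a; apply/eigenspaceP.
Qed.

Lemma reducible_pair_pm_id (A B : 'M[K]_2) : pm_id A -> reducible_pair A B.
Proof.
move=> pmA; have [v [v_neq0 Bv]] := exists_eigenvector B.
by exists v; split; first exact: pm_id_eigenvector.
Qed.

Lemma rank_eigenspace_non_scalar (C : 'M[K]_2) (a : K) :
  ~~ is_scalar_mx C -> (\rank (eigenspace C a) <= 1)%N.
Proof.
move=> nsC; rewrite mxrank_ker.
have : \rank (C - a%:M) != 0%N.
  rewrite mxrank_eq0 subr_eq0; apply: contra nsC => /eqP->.
  exact: scalar_mx_is_scalar.
by case: (\rank _) => [|[|]].
Qed.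

Lemma common_row_eigenvector_comm (C A B : 'M[K]_2) :
  ~~ is_scalar_mx C -> comm_mx C A -> comm_mx C B ->
  exists2 v : 'rV[K]_2, v != 0 & stablemx v A && stablemx v B.
Proof.
move=> nsC cCA cCB.
have /closed_rootP[a] : size (char_poly C) != 1 by rewrite size_char_poly.
rewrite -eigenvalue_root_char => /eigenvalueP[v /eigenspaceP vE v_neq0].
have Ev : (eigenspace C a <= v)%MS.
  have [_ <-] := mxrank_leqif_sup vE.
  by rewrite eqn_leq mxrankS // rank_rV v_neq0 rank_eigenspace_non_scalar.
have stable_v X : comm_mx C X -> stablemx v X.
  move=> cCX; apply: submx_trans Ev; apply: submx_trans (submxMr X vE) _.
  exact: comm_mx_stable_eigenspace.
by exists v; rewrite // !stable_v.
Qed.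

Lemma reducible_pair_comm_non_scalar (C A B : 'M[K]_2) :
  ~~ is_scalar_mx C -> comm_mx C A -> comm_mx C B -> reducible_pair A B.
Proof.
move=> nsC cCA cCB.
have trmx_comm X : comm_mx C X -> comm_mx C^T X^T.
  by rewrite /comm_mx -!trmx_mul => ->.
have nsCt : ~~ is_scalar_mx C^T.
  by apply: contra nsC => /is_scalar_mxP[c /(congr1 trmx)];
     rewrite trmxK tr_scalar_mx => ->; apply: scalar_mx_is_scalar.
have [v v_neq0 /andP[Av Bv]] :=
  common_row_eigenvector_comm nsCt (trmx_comm _ cCA) (trmx_comm _ cCB).
by exists v^T; split; apply: trmx_row_eigenvector.
Qed.

Lemma diagonalizable_expr_eq1 (n k : nat) (A : 'M[K]_n.+1) :
  k%:R != 0 :> K -> A ^+ k = 1 -> diagonalizable A.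
Proof.
move=> k_neq0 Ak.
have [rs def_p] := closed_field_poly_normal ('X^k - 1 : {poly K}).
have k_gt0 : (0 < k)%N by case: k k_neq0 {Ak def_p} => //; rewrite eqxx.
rewrite lead_coefXnsubC // scale1r in def_p.
apply/diagonalizableP; exists rs.
  by rewrite -separable_prod_XsubC -def_p separable_Xn_sub_1.
rewrite -def_p; apply: mxminpoly_min.
by rewrite rmorphB rmorphXn /= horner_mx_X rmorph1 Ak subrr.
Qed.

End ClosedField.

Lemma pm_id_expr_diagonalizable (K : numClosedFieldType) (k : nat)
    (A : 'M[K]_2) :
  (0 < k)%N -> pm_id (A ^+ k) -> diagonalizable A.
Proof.
move=> k_gt0 /pm_id_sqr Ak2.
have k2_neq0 : (k * 2)%:R != 0 :> K by rewrite pnatr_eq0 muln_eq0 negb_or -lt0n k_gt0.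
by apply: (diagonalizable_expr_eq1 k2_neq0); rewrite exprM.
Qed.

Theorem lemma2p2 (R : realType) (m n : nat) (A B : 'M[complex R]_2) :
  (0 < m)%N -> (0 < n)%N -> coprime m n ->
  inSL2 A -> inSL2 B -> A ^+ m = B ^+ n ->
  (~ pm_id (A ^+ m)
   \/ (pm_id A \/ pm_id B)
   \/ (~ diagonalizable A \/ ~ diagonalizable B)) ->
  reducible_pair A B.
Proof.
move=> m_gt0 n_gt0 _ SL2A _ AmBn cases.
have [scalar_Am | non_scalar_Am] := boolP (is_scalar_mx (A ^+ m)).
  have pm_Am := inSL2_scalar_pm_id (inSL2_expr m SL2A) scalar_Am.
  case: cases => [// | [[pmA | pmB] | [ndA | ndB]]].
  - exact: reducible_pair_pm_id.
  - exact/reducible_pair_sym/reducible_pair_pm_id.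
  - by case: ndA; apply: pm_id_expr_diagonalizable pm_Am.
  - by case: ndB; apply: (pm_id_expr_diagonalizable n_gt0); rewrite -AmBn.
apply: (reducible_pair_comm_non_scalar non_scalar_Am).
- exact/comm_mx_sym/commrX.
- by rewrite AmBn; apply/comm_mx_sym/commrX.
Qed.
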